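(* Let $G$ be a loopless graph and $n$ a positive integer. If $c$ and $d$ are two proper $n$-edge colorings of $G$ with $c\sim d$, and there is a vertex $v$ such that $c(e)=d(e)$ for every edge $e$ incident to $v$, then there exists a sequence of edge-Kempe switches transforming $c$ into $d$ in which the colors on the edges incident to $v$ are never changed.
   Context: Graphs are finite and may have multiple edges. A proper $n$-edge coloring assigns to each edge a color from $\{1,\dots,n\}$ so that edges sharing an endpoint receive different colors. For a proper edge coloring and two distinct colors $a,b$, an edge-Kempe chain is a connected component of the subgraph formed by the edges colored $a$ or $b$; an edge-Kempe switch interchanges the colors $a$ and $b$ on one such chain, producing another proper edge coloring. We write $c\sim d$ if $d$ can be obtained from $c$ by a finite sequence of edge-Kempe switches. *)

From mathcomp Require Import all_boot.
Set Implicit Arguments. Unset Strict Implicit. Unset Printing Implicit Defensive.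

(* A finite multigraph: vertex type V, edge type E, each edge e has
   endpoints (src e) and (dst e).  Multiple edges = distinct e with same ends. *)
Section EdgeKempe.
Variables (V E : finType) (src dst : E -> V).

Definition loopless : Prop := forall e : E, src e != dst e.

Definition incident (v : V) (e : E) : bool := (src e == v) || (dst e == v).

Definition share (e f : E) : bool :=
  [exists x : V, incident x e && incident x f].

Variable n : nat.

(* An n-edge coloring: colors are 'I_n, standing for {1,...,n}. *)
Definition coloring := {ffun E -> 'I_n}.

Definition proper_coloring (c : coloring) : Prop :=
  forall e f : E, e != f -> share e f -> c e != c f.

Definition ab_adj (c : coloring) (a b : 'I_n) (e f : E) : bool :=
  [&& c e \in [:: a; b], c f \in [:: a; b] & share e f].

Definition kchain (c : coloring) (a b : 'I_n) (e0 : E) : pred E :=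
  fun f => (c e0 \in [:: a; b]) && connect (ab_adj c a b) e0 f.

Definition swap_col (a b x : 'I_n) : 'I_n :=
  if x == a then b else if x == b then a else x.

Definition kempe_switch (c d : coloring) : bool :=
  [exists a : 'I_n, exists b : 'I_n, exists e0 : E,
     [&& a != b, c e0 \in [:: a; b] &
      [forall f : E, d f == (if kchain c a b e0 f then swap_col a b (c f) else c f)]]].

Definition kempe_equiv (c d : coloring) : bool := connect kempe_switch c d.

Definition fixes_at (v : V) (c d : coloring) : bool :=
  [forall e : E, incident v e ==> (d e == c e)].

End EdgeKempe.

From mathcomp Require Import all_boot all_fingroup.
Set Implicit Arguments. Unset Strict Implicit. Unset Printing Implicit Defensive.

(* Follow a switch sequence from c to d, but allow the current colouring to be
   known only up to a permutation p of the colours.  A switch of an {a,b}-chain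
   avoiding v is performed as is.  A switch of the {a,b}-chain K through v is
   replaced by switching all the other {a,b}-chains, which avoid v: the result
   differs from the intended one by the transposition (a b), absorbed into p.
   At the end we reach d recoloured by a permutation p fixing every colour seen
   at v, and p is undone one transposition (a, p a) at a time by switching all
   {a, p a}-chains, none of which meets v. *)

Lemma card_moved_mul_tperm (T : finType) (p : {perm T}) a : p a != a ->
  #|[pred u | (p * tperm a (p a))%g u != u]| < #|[pred u | p u != u]|.
Proof.
move=> pa; apply: proper_card; apply/properP; split.
  apply/subsetP => u; rewrite !unfold_in /= permM; apply: contra => /eqP pu.
  rewrite pu tpermD //; first by apply: contra_neq pa => ->.
  by apply: contra_neq pa => pau; rewrite (perm_inj (etrans pau (esym pu))).
by exists a; rewrite !unfold_in /= ?pa // permM tpermR eqxx.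
Qed.

Section KempeSwitchesFixingVertex.
Variables (V E : finType) (src dst : E -> V) (n : nat).
Local Notation col := (coloring E n).
Local Notation switch := (kempe_switch src dst (n:=n)).
Local Notation adj := (ab_adj src dst (n:=n)).
Local Notation chain := (kchain src dst (n:=n)).
Local Notation incident := (incident src dst).

Definition agree_on (Q : pred E) (c d : col) : bool :=
  [forall e, Q e ==> (d e == c e)].

Definition kempe_reach_fixing (Q : pred E) (c d : col) : Prop :=
  exists s, [/\ path switch c s, last c s = d & all (agree_on Q c) s].

Lemma agree_on_refl Q c : agree_on Q c c.
Proof. by apply/forallP => e; rewrite eqxx implybT. Qed.

Lemma agree_on_trans Q c d g : agree_on Q c d -> agree_on Q d g -> agree_on Q c g.
Proof.
move=> /forallP cd /forallP dg; apply/forallP => e; apply/implyP => Qe.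
by move: (cd e) (dg e); rewrite Qe => /eqP <- /eqP ->.
Qed.

Lemma kempe_reach_fixing_refl Q c : kempe_reach_fixing Q c c.
Proof. by exists [::]. Qed.

Lemma kempe_reach_fixing_agree Q c d : kempe_reach_fixing Q c d -> agree_on Q c d.
Proof.
case=> s [_ <- agr]; have : all (agree_on Q c) (c :: s) by rewrite /= agree_on_refl.
by move/allP; apply; apply: mem_last.
Qed.

Lemma kempe_reach_fixing_trans Q c d g :
  kempe_reach_fixing Q c d -> kempe_reach_fixing Q d g -> kempe_reach_fixing Q c g.
Proof.
move=> cd; have agr_cd := kempe_reach_fixing_agree cd.
case: cd agr_cd => s1 [p1 <- a1] agr_cd [s2 [p2 <- a2]].
exists (s1 ++ s2); rewrite cat_path last_cat p1 p2 all_cat a1; split=> //=.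
by apply/allP => h /(allP a2); apply: agree_on_trans agr_cd.
Qed.

Lemma kempe_reach_fixing_sub (Q Q' : pred E) c d : subpred Q' Q ->
  kempe_reach_fixing Q c d -> kempe_reach_fixing Q' c d.
Proof.
move=> sQ [s [p l agr]]; exists s; split=> //; apply/allP => g /(allP agr).
move=> /forallP cg; apply/forallP => e; apply/implyP => /sQ Qe.
by move: (cg e); rewrite Qe.
Qed.

Lemma switch_reach_fixing Q c d : switch c d -> agree_on Q c d ->
  kempe_reach_fixing Q c d.
Proof. by move=> cd agr; exists [:: d]; rewrite /= cd agr. Qed.

Lemma swap_colK (a b : 'I_n) : involutive (swap_col a b).
Proof.
move=> u; rewrite /swap_col.
have [->|ua] := eqVneq u a; first by rewrite eqxx; case: eqVneq.
have [->|ub] := eqVneq u b; first by rewrite eqxx.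
by rewrite (negbTE ua) (negbTE ub).
Qed.

Lemma swap_col_out (a b u : 'I_n) : u \notin [:: a; b] -> swap_col a b u = u.
Proof. by rewrite !inE /swap_col => /norP [/negbTE -> /negbTE ->]. Qed.

Lemma mem_swap_col (a b u : 'I_n) :
  (swap_col a b u \in [:: a; b]) = (u \in [:: a; b]).
Proof. by rewrite /swap_col; do ![case: eqVneq => [->|_] /=]; rewrite !inE ?eqxx ?orbT. Qed.

Lemma swap_col_perm (p : {perm 'I_n}) a b u :
  swap_col (p a) (p b) (p u) = p (swap_col a b u).
Proof. by rewrite /swap_col !(inj_eq perm_inj); do 2?case: ifP. Qed.

Lemma tperm_swap_col (a b u : 'I_n) : tperm a b u = swap_col a b u.
Proof. by rewrite permE. Qed.

Definition recolor (p : {perm 'I_n}) (c : col) : col := [ffun e => p (c e)].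

Lemma recolor1 c : recolor 1%g c = c.
Proof. by apply/ffunP => e; rewrite ffunE perm1. Qed.

Lemma recolorM p q c : recolor (p * q)%g c = recolor q (recolor p c).
Proof. by apply/ffunP => e; rewrite !ffunE permM. Qed.

Lemma mem_perm_pair (p : {perm 'I_n}) a b u :
  (p u \in [:: p a; p b]) = (u \in [:: a; b]).
Proof. by rewrite !inE !(inj_eq perm_inj). Qed.

Lemma switch_recolor p c d : switch c d -> switch (recolor p c) (recolor p d).
Proof.
case/existsP => a /existsP [b /existsP [e0 /and3P [ab ce0 /forallP cd]]].
apply/existsP; exists (p a); apply/existsP; exists (p b); apply/existsP; exists e0.
have chainE : chain (recolor p c) (p a) (p b) e0 =1 chain c a b e0.
  move=> f; rewrite /kchain ffunE mem_perm_pair; congr andb.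
  by apply: eq_connect => g h; rewrite /ab_adj !ffunE !mem_perm_pair.
rewrite (inj_eq perm_inj) ab ffunE mem_perm_pair ce0 /=; apply/forallP => f.
by rewrite !ffunE chainE (eqP (cd f)); case: ifP; rewrite ?swap_col_perm.
Qed.

Lemma kempe_reach_fixing_recolor p Q c d :
  kempe_reach_fixing Q c d -> kempe_reach_fixing Q (recolor p c) (recolor p d).
Proof.
case=> s [pth <- agr]; exists (map (recolor p) s); split; last 2 first.
- by rewrite last_map.
- rewrite all_map; apply/allP => g /(allP agr) /forallP cg /=; apply/forallP.
  by move=> f; apply/implyP => Qf; move: (cg f); rewrite Qf !ffunE => /eqP ->.
by elim: s c pth {agr} => //= g s IH c /andP [cg gs]; rewrite switch_recolor ?IH.
Qed.

Lemma adj_sym c a b : symmetric (adj c a b).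
Proof.
move=> f g; rewrite /ab_adj andbCA; congr [&& _, _ & _].
by apply/existsP/existsP => -[w]; exists w; rewrite andbC.
Qed.

Lemma adj_connect_sym c a b : connect_sym (adj c a b).
Proof. exact/sym_connect_sym/adj_sym. Qed.

Lemma chain_adj c a b e0 f g : chain c a b e0 f -> adj c a b f g -> chain c a b e0 g.
Proof. by case/andP => ce0 e0f fg; rewrite /kchain ce0 (connect_trans e0f) ?connect1. Qed.

Lemma chainN_adj c a b e0 f g :
  ~~ chain c a b e0 f -> adj c a b f g -> ~~ chain c a b e0 g.
Proof. by move=> nKf fg; apply: contra nKf => Kg; apply: chain_adj Kg _; rewrite adj_sym. Qed.

Lemma chain_col c a b e0 f : chain c a b e0 f -> c f \in [:: a; b].
Proof.
case/andP => ce0 e0f.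
have cl : closed (adj c a b) [pred g | c g \in [:: a; b]].
  by apply: (intro_closed (adj_connect_sym c a b)) => g h /and3P [_ ch _].
by rewrite -[_ \in _]/(f \in [pred g | c g \in [:: a; b]]) -(closed_connect cl e0f).
Qed.

Lemma chain_self (c : col) (a b : 'I_n) e0 : c e0 \in [:: a; b] -> chain c a b e0 e0.
Proof. by move=> ce0; rewrite /kchain ce0 connect0. Qed.

Definition swap_on (a b : 'I_n) (P : pred E) (c : col) : col :=
  [ffun e => if P e then swap_col a b (c e) else c e].

Lemma adj_swap_on a b P c : adj (swap_on a b P c) a b =2 adj c a b.
Proof.
by move=> f g; rewrite /ab_adj !ffunE; do 2!case: ifP => _; rewrite ?mem_swap_col.
Qed.

Lemma switch_swap_chain (c : col) (a b : 'I_n) e0 : a != b -> c e0 \in [:: a; b] ->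
  switch c (swap_on a b (chain c a b e0) c).
Proof.
move=> ab ce0; apply/existsP; exists a; apply/existsP; exists b; apply/existsP.
by exists e0; rewrite ab ce0 /=; apply/forallP => f; rewrite ffunE.
Qed.

Lemma recolor_tperm (a b : 'I_n) (c : col) :
  recolor (tperm a b) c = swap_on a b (fun e => c e \in [:: a; b]) c.
Proof.
apply/ffunP => e; rewrite !ffunE tperm_swap_col.
by case: ifPn => // /swap_col_out.
Qed.

Lemma recolor_tperm_swap_on (a b : 'I_n) (K : pred E) (c : col) :
  recolor (tperm a b) (swap_on a b K c)
  = swap_on a b [pred e | (c e \in [:: a; b]) && ~~ K e] c.
Proof.
apply/ffunP => e; rewrite !ffunE tperm_swap_col /=.
case: (K e); first by rewrite swap_colK andbF.
by rewrite andbT; case: ifPn => // /swap_col_out.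
Qed.

(* The hypotheses say that P is a union of {a,b}-chains; they are switched one
   at a time. *)
Lemma kempe_reach_swap_on (a b : 'I_n) (P : pred E) (c : col) : a != b ->
  (forall e, P e -> c e \in [:: a; b]) ->
  (forall f g, P f -> adj c a b f g -> P g) ->
  kempe_reach_fixing (predC P) c (swap_on a b P c).
Proof.
move=> ab; have [m] := ubnP #|P|; elim: m P c => // m IH P c /ltnSE cardP colP closP.
have [f0 Pf0 | P0] := pickP P; last first.
  have -> : swap_on a b P c = c by apply/ffunP => e; rewrite ffunE P0.
  exact: kempe_reach_fixing_refl.
have cf0 := colP f0 Pf0; set K := chain c a b f0.
have KP e : K e -> P e.
  have cl : closed (adj c a b) P.
    by apply: (intro_closed (adj_connect_sym c a b)) => f g fg /closP; apply.
  by move=> /andP [_ f0e]; rewrite -[P e]/(e \in P) -(closed_connect cl f0e).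
pose P' := [pred e | P e && ~~ K e]; set c1 := swap_on a b K c.
have -> : swap_on a b P c = swap_on a b P' c1.
  apply/ffunP => e; rewrite !ffunE /=.
  by case Ke: (K e); [rewrite (KP _ Ke) | rewrite andbT].
apply: (@kempe_reach_fixing_trans _ _ c1).
  apply: switch_reach_fixing; first exact: switch_swap_chain.
  apply/forallP => e; apply/implyP => /= nPe; rewrite ffunE.
  by case: ifP => // /KP Pe; rewrite Pe in nPe.
have subP : subpred (predC P) (predC P') by move=> e /= /negbTE ->.
apply: kempe_reach_fixing_sub subP (IH P' c1 _ _ _).
- apply: leq_trans _ cardP; apply: proper_card; apply/properP; split.
    by apply/subsetP => e; rewrite !unfold_in /= => /andP [].
  by exists f0; rewrite !unfold_in /= Pf0 //=; apply/negPn; exact: chain_self.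
- by move=> e /andP [Pe nKe]; rewrite ffunE (negbTE nKe) colP.
move=> f g /andP [Pf nKf]; rewrite adj_swap_on => fg.
by rewrite /= (closP _ _ Pf fg) (chainN_adj nKf fg).
Qed.

Variable v : V.

Lemma kempe_reach_swap_colors (a b : 'I_n) (c : col) : a != b ->
  (forall e, incident v e -> c e \notin [:: a; b]) ->
  kempe_reach_fixing (incident v) c (recolor (tperm a b) c).
Proof.
move=> ab vab; rewrite recolor_tperm.
by apply: kempe_reach_fixing_sub (kempe_reach_swap_on ab _ _) => // f g _ /and3P [].
Qed.

Lemma switch_recolor_fixing p c d : switch c d ->
  exists q, kempe_reach_fixing (incident v) (recolor p c) (recolor q d).
Proof.
case/existsP => a /existsP [b /existsP [e0 /and3P [ab ce0 /forallP cd]]].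
have -> : d = swap_on a b (chain c a b e0) c.
  by apply/ffunP => f; rewrite ffunE; apply/eqP.
set K := chain c a b e0.
have [/existsP [e1 /andP [ve1 Ke1]] | /existsPn Kv] :=
  boolP [exists e, incident v e && K e]; last first.
  exists p; apply: switch_reach_fixing; first exact/switch_recolor/switch_swap_chain.
  apply/forallP => f; apply/implyP => vf; rewrite !ffunE.
  by case: ifP => // Kf; move: (Kv f); rewrite vf Kf.
exists (tperm a b * p)%g; rewrite recolorM recolor_tperm_swap_on.
apply: kempe_reach_fixing_recolor.
have vK : subpred (incident v) (predC [pred e | (c e \in [:: a; b]) && ~~ K e]).
  move=> f vf; apply/negP => /andP [cf /negP []].
  apply: (chain_adj Ke1); rewrite /ab_adj (chain_col Ke1) cf.
  by apply/existsP; exists v; rewrite ve1 vf.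
apply: kempe_reach_fixing_sub vK (kempe_reach_swap_on ab _ _) => [f /andP [] //|].
move=> f g /andP [_ nKf] fg; case/and3P: (fg) => _ cg _.
by rewrite /= cg (chainN_adj nKf fg).
Qed.

Lemma kempe_reach_unrecolor (p : {perm 'I_n}) (d : col) :
  (forall e, incident v e -> p (d e) = d e) ->
  kempe_reach_fixing (incident v) (recolor p d) d.
Proof.
have [m] := ubnP #|[pred u | p u != u]|; elim: m p => // m IH p /ltnSE moved fixv.
have [a /= pa | fixed] := pickP [pred u | p u != u]; last first.
  suff -> : p = 1%g by rewrite recolor1; apply: kempe_reach_fixing_refl.
  by apply/permP => u; rewrite perm1; apply/eqP/negbFE/fixed.
have vab e : incident v e -> d e \notin [:: a; p a].
  move=> ve; rewrite !inE negb_or; apply/andP; split; apply: contra_neq pa => de.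
    by rewrite -de fixv.
  by apply: (@perm_inj _ p); rewrite -de fixv.
have fixv' e : incident v e -> (p * tperm a (p a))%g (d e) = d e.
  move=> ve; have := vab e ve; rewrite !inE negb_or => /andP [nda ndpa].
  by rewrite permM fixv // tpermD // eq_sym.
have := IH _ (leq_trans (card_moved_mul_tperm pa) moved) fixv'.
apply: kempe_reach_fixing_trans; rewrite recolorM.
apply: kempe_reach_swap_colors; first by rewrite eq_sym.
by move=> e ve; rewrite ffunE fixv // vab.
Qed.

Lemma kempe_reach_fixing_up_to_recolor (c x : col) s p : path switch x s ->
  kempe_reach_fixing (incident v) c (recolor p x) ->
  exists q, kempe_reach_fixing (incident v) c (recolor q (last x s)).
Proof.
elim: s x p => [|y s IH] x p /=; first by exists p.
case/andP => xy ys cx; have [q xy'] := switch_recolor_fixing p xy.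
exact: IH ys (kempe_reach_fixing_trans cx xy').
Qed.

Lemma kempe_equiv_fixing (c d : col) : kempe_equiv src dst (n:=n) c d ->
  (forall e, incident v e -> c e = d e) -> kempe_reach_fixing (incident v) c d.
Proof.
move=> /connectP [s cs ->] cdv.
have c1 : kempe_reach_fixing (incident v) c (recolor 1%g c).
  by rewrite recolor1; apply: kempe_reach_fixing_refl.
have [p cp] := kempe_reach_fixing_up_to_recolor cs c1.
apply: (kempe_reach_fixing_trans cp (kempe_reach_unrecolor _)) => e ve.
move/forallP/(_ e): (kempe_reach_fixing_agree cp); rewrite ve ffunE => /eqP ->.
by rewrite cdv.
Qed.

End KempeSwitchesFixingVertex.

Theorem theorem5 (V E : finType) (src dst : E -> V) (n : nat) :
  loopless src dst -> 0 < n ->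
  forall c d : coloring E n,
    proper_coloring src dst c -> proper_coloring src dst d ->
    kempe_equiv src dst (n:=n) c d ->
    forall v : V, (forall e : E, incident src dst v e -> c e = d e) ->
    exists s : seq (coloring E n),
      [/\ path (kempe_switch src dst (n:=n)) c s, last c s = d &
          all (fixes_at src dst (n:=n) v c) s].
Proof. by move=> _ _ c d _ _ cd v cdv; apply: kempe_equiv_fixing cd cdv. Qed.
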